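(* Fix an architecture $(\mathbf d,\mathbf k,\mathbf s)$ of depth $N$, a loss $\ell:\mathbb{R}^{d_N}\times\mathbb{R}^{d_N}\to\mathbb{R}$, and data $X=(x_1,\dots,x_m)\in\mathbb{R}^{d_0\times m}$, $Y=(y_1,\dots,y_m)\in\mathbb{R}^{d_N\times m}$, and let $\mathcal{L}(\vec w)=\sum_{i=1}^m\ell(\Pi(\vec w)x_i,y_i)$. Assume that $XX^\top$ has full rank and that there exists a monotonically increasing function $h:\mathbb{R}\to\mathbb{R}_{\ge0}$ such that \[ \|WX-Y\|_1\le h\Big(\sum_{i=1}^m\ell(Wx_i,y_i)\Big)\qquad\text{for all } W\in\mathbb{R}^{d_N\times d_0}. \] Then there exists a non-decreasing function $g:\mathbb{R}\to\mathbb{R}_{\ge0}$ such that $\|\pi(\vec w)\|_1\le g(\mathcal{L}(\vec w))$ for all $\vec w\in\mathbb{R}^{\sum_{i=1}^N k_i}$.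
   Context: An architecture of depth $N$ is a triple $(\mathbf d,\mathbf k,\mathbf s)=((d_0,\dots,d_N),(k_1,\dots,k_N),(s_1,\dots,s_N))$ of positive integers with $d_i=\frac{d_{i-1}-k_i}{s_i}+1$. For a filter $w\in\mathbb{R}^{k}$ and stride $s$, the convolutional matrix $\Pi_{(d',d''),k,s}(w)\in\mathbb{R}^{d''\times d'}$ has entries $W_{j,(j-1)s+n}=w_n$ ($j\le d''$, $n\le k$) and zeros elsewhere. For $\vec w=(w^{(1)},\dots,w^{(N)})$, $w^{(i)}\in\mathbb{R}^{k_i}$, $\Pi(\vec w):=W_N\cdots W_1$ with $W_i=\Pi_{(d_{i-1},d_i),k_i,s_i}(w^{(i)})$; this is a convolutional matrix with stride $\prod_i s_i$ and filter width $k_v=k_1+\sum_{i=2}^N(k_i-1)\prod_{m=1}^{i-1}s_m$, and its filter is denoted $\pi(\vec w)\in\mathbb{R}^{k_v}$. For a matrix $A=(a_{ij})$, $\|A\|_1:=\sum_{i,j}|a_{ij}|$ (entrywise $\ell_1$-norm); for vectors $\|\cdot\|_1$ is the usual $\ell_1$-norm. *)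

From HB Require Import structures.
From mathcomp Require Import all_boot all_order all_algebra.
From mathcomp Require Import reals.
Unset Printing Implicit Defensive.
Import Order.TTheory GRing.Theory Num.Theory.
Local Open Scope ring_scope.

Definition architecture (N : nat) (d k s : nat -> nat) : Prop :=
  (0 < N)%N /\ (0 < d 0)%N /\
  forall i, (1 <= i <= N)%N ->
    [/\ (0 < d i)%N, (0 < k i)%N, (0 < s i)%N &
        (d i)%:R = ((d i.-1)%:R - (k i)%:R) / (s i)%:R + 1 :> rat].

(* Pi_{(d',d''),k,s}(w) : W_{j,(j-1)s+n} = w_n (1-indexed), 0 elsewhere.
   0-indexed: W j c = w n when c = j*s + n, n < k. *)
Definition convmx {R : pzRingType} (dp dpp : nat) {k : nat} (s : nat) (w : 'rV[R]_k)
  : 'M[R]_(dpp, dp) :=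
  \matrix_(j < dpp, c < dp) \sum_(n < k | (val c == val j * s + val n)%N) w 0 n.

Fixpoint convprod {R : pzRingType} (d k s : nat -> nat)
  (w : forall i : nat, 'rV[R]_(k i)) (i : nat) : 'M[R]_(d i, d 0) :=
  match i return 'M[R]_(d i, d 0) with
  | 0 => 1%:M
  | i'.+1 => convmx (d i') (d i'.+1) (s i'.+1) (w i'.+1) *m convprod d k s w i'
  end.

Definition conv_Pi {R : pzRingType} (N : nat) (d k s : nat -> nat)
  (w : forall i : nat, 'rV[R]_(k i)) : 'M[R]_(d N, d 0) := convprod d k s w N.

Definition kv (N : nat) (k s : nat -> nat) : nat :=
  (k 1 + \sum_(2 <= i < N.+1) (k i - 1) * \prod_(1 <= m < i) s m)%N.

(* the filter of the convolutional matrix Pi(w): its first row, first k_v entries *)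
Definition conv_filter {R : pzRingType} (N : nat) (d k s : nat -> nat)
  (w : forall i : nat, 'rV[R]_(k i)) : 'rV[R]_(kv N k s) :=
  \row_(t < kv N k s)
    \sum_(j < d N | val j == 0%N) \sum_(c < d 0 | val c == val t) conv_Pi N d k s w j c.

Definition l1mx {R : numDomainType} {m n : nat} (A : 'M[R]_(m, n)) : R :=
  \sum_(i < m) \sum_(j < n) `|A i j|.

From HB Require Import structures.
From mathcomp Require Import all_boot all_order all_algebra.
From mathcomp Require Import reals.
Import Order.TTheory GRing.Theory Num.Theory.
Local Open Scope ring_scope.

(* The filter pi(w) is a piece of the first row of Pi(w), so it suffices to
   bound ||Pi(w)||_1.  As X X^T has full rank, X has a right inverse B, and
   then Pi(w) = (Pi(w) X) B gives
     ||Pi(w)||_1 <= ||B||_1 ||Pi(w) X||_1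
                 <= ||B||_1 (||Pi(w) X - Y||_1 + ||Y||_1)
                 <= ||B||_1 (h(L(w)) + ||Y||_1),
   so g x := ||B||_1 (h x + ||Y||_1) works.  Nothing about the convolutional
   structure of Pi(w) is needed, hence neither is the architecture hypothesis. *)

Section L1Norm.
Context {R : numDomainType}.

Lemma l1mx_ge0 {m n} (A : 'M[R]_(m, n)) : 0 <= l1mx A.
Proof. by apply: sumr_ge0 => i _; apply: sumr_ge0. Qed.

Lemma ler_l1mxD {m n} (A B : 'M[R]_(m, n)) : l1mx (A + B) <= l1mx A + l1mx B.
Proof.
rewrite /l1mx -big_split; apply: ler_sum => i _.
rewrite -big_split; apply: ler_sum => j _; rewrite mxE; exact: ler_normD.
Qed.

Lemma ler_l1mx_subr {m n} (A B : 'M[R]_(m, n)) : l1mx A <= l1mx (A - B) + l1mx B.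
Proof. by rewrite -{1}(subrK B A) ler_l1mxD. Qed.

Lemma ler_l1mxM {m n p} (A : 'M[R]_(m, n)) (B : 'M[R]_(n, p)) :
  l1mx (A *m B) <= l1mx A * l1mx B.
Proof.
rewrite /l1mx mulr_suml; apply: ler_sum => i _; rewrite mulr_suml.
have entry_le j : `|(A *m B) i j| <= \sum_(l < n) `|A i l| * `|B l j|.
  rewrite mxE; apply: le_trans (ler_norm_sum _ _ _) _.
  by apply: ler_sum => l _; rewrite normrM.
apply: le_trans (ler_sum _ (fun j _ => entry_le j)) _.
rewrite exchange_big /=; apply: ler_sum => l _; rewrite -mulr_sumr.
apply: ler_wpM2l => //; rewrite (bigD1 l) //= lerDl.
by apply: sumr_ge0 => l' _; apply: sumr_ge0.
Qed.

Lemma ler_l1mx_rinv {m n p} [X : 'M[R]_(n, p)] [B : 'M[R]_(p, n)] (W : 'M[R]_(m, n)) :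
  X *m B = 1%:M -> l1mx W <= l1mx (W *m X) * l1mx B.
Proof. by move=> XB1; rewrite -{1}(mulmx1 W) -XB1 mulmxA ler_l1mxM. Qed.

End L1Norm.

Lemma row_free_mulmx_tr {F : fieldType} {m n} (X : 'M[F]_(m, n)) :
  \rank (X *m X^T) = m -> row_free X.
Proof. by move=> rkXXt; rewrite -row_leq_rank -{1}rkXXt mxrankM_maxl. Qed.

Lemma l1mx_conv_filter_le {R : numDomainType} {N d k s}
    (w : forall i : nat, 'rV[R]_(k i)) :
  l1mx (conv_filter N d k s w) <= l1mx (conv_Pi N d k s w).
Proof.
set P := conv_Pi N d k s w.
have entry_le t : `|conv_filter N d k s w 0 t|
    <= \sum_(j < d N) \sum_(c < d 0 | val c == val t) `|P j c|.
  rewrite mxE; apply: le_trans (ler_norm_sum _ _ _) _.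
  apply: le_trans (ler_sum _ (fun j _ => ler_norm_sum _ _ _)) _.
  rewrite [leRHS](bigID (fun j : 'I_(d N) => val j == 0%N)) /= lerDl.
  by apply: sumr_ge0 => j _; apply: sumr_ge0.
rewrite /l1mx big_ord1; apply: le_trans (ler_sum _ (fun t _ => entry_le t)) _.
rewrite (exchange_big_dep predT) //=; apply: ler_sum => j _.
rewrite (exchange_big_dep predT) //=; apply: ler_sum => c _.
have [c_lt | c_ge] := ltnP (val c) (kv N k s).
  by rewrite (big_pred1 (Ordinal c_lt)).
rewrite big_pred0 // => t /=; apply/negbTE/eqP => ct.
by move: (ltn_ord t); rewrite -ct ltnNge c_ge.
Qed.

Theorem lemma3p6 (R : realType) (N : nat) (d k s : nat -> nat)
  (harch : architecture N d k s)
  (loss : 'cV[R]_(d N) -> 'cV[R]_(d N) -> R)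
  (m : nat) (X : 'M[R]_(d 0%N, m)) (Y : 'M[R]_(d N, m))
  (hX : \rank (X *m X^T) = d 0%N)
  (h : R -> R) (h_ge0 : forall x, 0 <= h x)
  (h_mono : forall x y, x <= y -> h x <= h y)
  (hbound : forall W : 'M[R]_(d N, d 0%N),
      l1mx (W *m X - Y) <= h (\sum_(i < m) loss (W *m col i X) (col i Y))) :
  exists g : R -> R,
    [/\ forall x, 0 <= g x,
        forall x y, x <= y -> g x <= g y &
        forall w : forall i : nat, 'rV[R]_(k i),
          l1mx (conv_filter N d k s w) <=
          g (\sum_(i < m) loss (conv_Pi N d k s w *m col i X) (col i Y))].
Proof.
have [B XB1] := row_freeP (row_free_mulmx_tr X hX).
exists (fun x => l1mx B * (h x + l1mx Y)); split.
- by move=> x; rewrite mulr_ge0 ?addr_ge0 ?l1mx_ge0.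
- by move=> x y le_xy; rewrite ler_wpM2l ?l1mx_ge0 ?lerD2r ?h_mono.
move=> w /=; set P := conv_Pi N d k s w.
apply: le_trans (l1mx_conv_filter_le w) _.
apply: le_trans (ler_l1mx_rinv P XB1) _; rewrite mulrC ler_wpM2l ?l1mx_ge0 //.
by apply: le_trans (ler_l1mx_subr _ Y) _; rewrite lerD2r hbound.
Qed.
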